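(* Let $G\rightrightarrows X$ be a topological groupoid which is proper and source-locally trivial. Then every fixed point $x\in X$ of $G$ is stable, i.e. every neighborhood of $x$ in $X$ contains a $G$-invariant neighborhood of $x$.
   Context: All spaces are Hausdorff and neighborhoods are open. $\alpha,\beta$ denote the target and source maps of $G$. $G$ is proper if the map $(\alpha,\beta):G\to X\times X$ is proper (preimages of compact sets are compact). $G$ is source-locally trivial if the source map $\beta:G\to X$ is a locally trivial fibration. A point $x\in X$ is a fixed point if its orbit $\{\alpha(g): \beta(g)=x\}$ is $\{x\}$. A subset $A\subseteq X$ is $G$-invariant if $\alpha(g)\in A$ whenever $\beta(g)\in A$. *)

From HB Require Import structures.
From mathcomp Require Import all_boot all_order all_algebra.
From mathcomp Require Import all_classical all_reals all_analysis.
Set Implicit Arguments. Unset Strict Implicit. Unset Printing Implicit Defensive.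
Import numFieldNormedType.Exports.
Local Open Scope classical_set_scope.

(* A topological groupoid G ==> X with target alpha, source beta, unit u,
   inverse inv and multiplication mul; g * h (= mul g h) is defined when
   beta g = alpha h (so g : beta g -> alpha g).  mul is a total function on
   G * G but its values are only constrained on composable pairs. *)
Record is_top_groupoid (G X : topologicalType) (alpha beta : G -> X)
    (u : X -> G) (inv : G -> G) (mul : G -> G -> G) : Prop := {
  tg_alpha_u : forall x, alpha (u x) = x;
  tg_beta_u : forall x, beta (u x) = x;
  tg_alpha_mul : forall g h, beta g = alpha h -> alpha (mul g h) = alpha g;
  tg_beta_mul : forall g h, beta g = alpha h -> beta (mul g h) = beta h;
  tg_assoc : forall g h k, beta g = alpha h -> beta h = alpha k ->
     mul (mul g h) k = mul g (mul h k);
  tg_unit_l : forall g, mul (u (alpha g)) g = g;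
  tg_unit_r : forall g, mul g (u (beta g)) = g;
  tg_alpha_inv : forall g, alpha (inv g) = beta g;
  tg_beta_inv : forall g, beta (inv g) = alpha g;
  tg_inv_r : forall g, mul g (inv g) = u (alpha g);
  tg_inv_l : forall g, mul (inv g) g = u (beta g);
  tg_cont_alpha : continuous alpha;
  tg_cont_beta : continuous beta;
  tg_cont_u : continuous u;
  tg_cont_inv : continuous inv;
  tg_cont_mul : {within [set p : G * G | beta p.1 = alpha p.2],
                   continuous (fun p : G * G => mul p.1 p.2)}
}.

Definition groupoid_proper (G X : topologicalType) (alpha beta : G -> X) : Prop :=
  forall K : set (X * X), compact K ->
    compact ((fun g => (alpha g, beta g)) @^-1` K).

Definition locally_trivial_fibration (G X : topologicalType) (p : G -> X) : Prop :=
  forall x : X, exists U : set X, open U /\ U x /\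
    exists (F : topologicalType) (phi : G -> X * F) (psi : X * F -> G),
      [/\ (forall g, U (p g) -> U (phi g).1 /\ (phi g).1 = p g /\ psi (phi g) = g),
          (forall q : X * F, U q.1 -> U (p (psi q)) /\ phi (psi q) = q),
          {within p @^-1` U, continuous phi} &
          {within [set q : X * F | U q.1], continuous psi}].

Definition source_locally_trivial (G X : topologicalType) (beta : G -> X) : Prop :=
  locally_trivial_fibration beta.

Definition fixed_point (G X : topologicalType) (alpha beta : G -> X) (x : X) : Prop :=
  [set alpha g | g in [set g | beta g = x]] = [set x].

Definition invariant_set (G X : topologicalType) (alpha beta : G -> X) (A : set X) : Prop :=
  forall g, A (beta g) -> A (alpha g).

Definition stable_point (G X : topologicalType) (alpha beta : G -> X) (x : X) : Prop :=
  forall U : set X, open U -> U x ->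
    exists V : set X, [/\ open V, V x, V `<=` U & invariant_set alpha beta V].

From mathcomp Require Import all_boot all_order all_algebra.
From mathcomp Require Import all_classical all_reals all_analysis.
Set Implicit Arguments. Unset Strict Implicit.
Local Open Scope classical_set_scope.

(* At a fixed point x the source fibre beta^-1(x) is (alpha, beta)^-1(x, x),
   which is compact by properness.  In a local trivialisation
   beta^-1(W) ~ W * F over x this forces F to be compact, so the tube lemma
   gives an open V around x with alpha(beta^-1(V)) inside U.  The saturation
   alpha(beta^-1(V)) is invariant, contains V and lies in U; it is open since
   it equals beta(alpha^-1(V)) and a locally trivial fibration is an open map. *)

Section Chart.
Context {G X F : topologicalType} (p : G -> X) (W : set X)
  (phi : G -> X * F) (psi : X * F -> G).
Hypothesis oW : open W.
Hypothesis phiK : forall g, W (p g) ->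
  W (phi g).1 /\ (phi g).1 = p g /\ psi (phi g) = g.
Hypothesis psiK : forall q : X * F, W q.1 -> W (p (psi q)) /\ phi (psi q) = q.
Hypothesis phi_cont : {within p @^-1` W, continuous phi}.
Hypothesis psi_cont : {within [set q : X * F | W q.1], continuous psi}.

Lemma chart_proj (q : X * F) : W q.1 -> p (psi q) = q.1.
Proof.
move=> Wq; have [Wpq phipsi] := psiK Wq.
by have [_ [<- _]] := phiK Wpq; rewrite phipsi.
Qed.

Lemma chart_fibre (g : G) : W (p g) -> g = psi (p g, (phi g).2).
Proof. by move=> /phiK[_ [<- gK]]; rewrite -surjective_pairing gK. Qed.

Lemma chart_psi_continuous (q : X * F) : W q.1 -> psi @ q --> psi q.
Proof.
have oWF : open [set q : X * F | W q.1].
  by apply: open_comp => // r _; exact: cvg_fst.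
by move: psi_cont; rewrite continuous_open_subspace // => /(_ q) + Wq; apply; rewrite inE.
Qed.

Lemma chart_fibre_compact (x : X) :
  W x -> compact (p @^-1` [set x]) -> compact [set: F].
Proof.
move=> Wx cfibre.
have -> : [set: F] = (snd \o phi) @` (p @^-1` [set x]).
  apply/seteqP; split => // f _; exists (psi (x, f)); first exact: chart_proj.
  by have [_ /= ->] := psiK (Wx : W (x, f).1).
apply: continuous_compact => // g.
apply: (@continuous_comp _ _ _ (from_subspace _ phi) snd g); last exact: cvg_snd.
by apply: (continuous_subspaceW _ phi_cont) => h /= ->.
Qed.

Lemma chart_image_nbhs (O : set G) (g : G) :
  W (p g) -> open O -> O g -> nbhs (p g) (p @` O).
Proof.
move=> Wg oO Og; have [Wg1 [pg gK]] := phiK Wg.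
have : nbhs (phi g) (psi @^-1` O).
  by apply: chart_psi_continuous => //; apply: open_nbhs_nbhs; rewrite gK.
rewrite (surjective_pairing (phi g)) pg => -[[A B]] /= [nA nB] AB.
apply: filterS (filterI nA (open_nbhs_nbhs (conj oW Wg))) => z [Az Wz].
exists (psi (z, (phi g).2)); last exact: chart_proj.
by apply: (AB (z, _)); split => //; exact: nbhs_singleton.
Qed.

Lemma chart_tube (x : X) (N : set G) : W x -> compact [set: F] -> open N ->
  p @^-1` [set x] `<=` N -> \forall y \near x, p @^-1` [set y] `<=` N.
Proof.
move=> Wx cF oN xN.
have tube (f : F) : \forall f' \near f & y \near x, N (psi (y, f')).
  have : nbhs (x, f) (psi @^-1` N).
    apply: (@chart_psi_continuous (x, f) Wx); apply: open_nbhs_nbhs; split => //.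
    exact/xN/chart_proj.
  case=> [[A B]] /= [nA nB] AB; exists (B, A) => // -[f' y] [/= ? ?].
  exact: (AB (y, f')).
have nearN : \forall y \near x, [set: F] `<=` (fun f => N (psi (y, f))).
  exact: (compact_near_coveringP _).1 cF _ _ _ _ (fun f _ => tube f).
apply: filterS (filterI (open_nbhs_nbhs (conj oW Wx)) nearN) => y [Wy Ny] g pg.
by rewrite (chart_fibre (_ : W (p g))) ?pg //; apply: Ny.
Qed.

End Chart.

Lemma locally_trivial_fibration_open (G X : topologicalType) (p : G -> X) :
  locally_trivial_fibration p -> forall O : set G, open O -> open (p @` O).
Proof.
move=> ltf O oO; rewrite openE => _ [g Og <-].
have [W [oW [Wg [F [phi [psi [phiK psiK _ psi_cont]]]]]]] := ltf (p g).
exact: (chart_image_nbhs oW phiK psiK psi_cont Wg oO Og).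
Qed.

Lemma locally_trivial_fibration_tube (G X : topologicalType) (p : G -> X)
    (x : X) (N : set G) :
  locally_trivial_fibration p -> compact (p @^-1` [set x]) -> open N ->
  p @^-1` [set x] `<=` N -> exists2 V : set X, open_nbhs x V & p @^-1` V `<=` N.
Proof.
move=> ltf cfibre oN xN.
have [W [oW [Wx [F [phi [psi [phiK psiK phi_cont psi_cont]]]]]]] := ltf x.
have cF := chart_fibre_compact phiK psiK phi_cont Wx cfibre.
have := chart_tube oW phiK psiK psi_cont Wx cF oN xN.
rewrite /prop_near1 nbhsE => -[V nV VN]; exists V => // g Vg.
exact: VN Vg g erefl.
Qed.

Definition saturation (G X : Type) (alpha beta : G -> X) (V : set X) : set X :=
  alpha @` (beta @^-1` V).

Section Groupoid.
Context {G X : topologicalType} {alpha beta : G -> X} {u : X -> G}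
  {inv : G -> G} {mul : G -> G -> G}.
Hypothesis HG : is_top_groupoid alpha beta u inv mul.

Lemma sub_saturation (V : set X) : V `<=` saturation alpha beta V.
Proof. by move=> y Vy; exists (u y); rewrite /= ?(tg_beta_u HG) ?(tg_alpha_u HG). Qed.

Lemma saturation_invariant (V : set X) :
  invariant_set alpha beta (saturation alpha beta V).
Proof.
move=> g [h Vh bg]; exists (mul g h); first by rewrite /= (tg_beta_mul HG).
by rewrite (tg_alpha_mul HG).
Qed.

Lemma saturationE (V : set X) :
  saturation alpha beta V = beta @` (alpha @^-1` V).
Proof.
by apply/seteqP; split => _ [g Vg <-]; exists (inv g);
  rewrite /= ?(tg_alpha_inv HG) ?(tg_beta_inv HG).
Qed.

Lemma open_saturation (V : set X) :
  locally_trivial_fibration beta -> open V -> open (saturation alpha beta V).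
Proof.
move=> ltf oV; rewrite saturationE; apply: locally_trivial_fibration_open => //.
exact: (continuousP _).1 (tg_cont_alpha HG) _ oV.
Qed.

End Groupoid.

Lemma fixed_point_fibre (G X : topologicalType) (alpha beta : G -> X) (x : X) :
  fixed_point alpha beta x ->
  beta @^-1` [set x] = (fun g => (alpha g, beta g)) @^-1` [set (x, x)].
Proof.
move=> fx; apply/seteqP; split => g /=; last by case=> _ ->.
move=> bg; have : [set alpha g | g in [set g | beta g = x]] (alpha g) by exists g.
by rewrite fx /= => ->; rewrite bg.
Qed.

Theorem theorem3p3 (G X : topologicalType)
  (alpha beta : G -> X) (u : X -> G) (inv : G -> G) (mul : G -> G -> G) :
  hausdorff_space G -> hausdorff_space X ->
  is_top_groupoid alpha beta u inv mul ->
  groupoid_proper alpha beta ->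
  source_locally_trivial beta ->
  forall x : X, fixed_point alpha beta x -> stable_point alpha beta x.
Proof.
move=> _ _ HG proper ltf x fx U oU Ux.
have cfibre : compact (beta @^-1` [set x]).
  by rewrite (fixed_point_fibre fx); apply: proper; exact: compact_set1.
have [V [oV Vx] VU] :
    exists2 V : set X, open_nbhs x V & beta @^-1` V `<=` alpha @^-1` U.
  apply: locally_trivial_fibration_tube => //.
    exact: (continuousP _).1 (tg_cont_alpha HG) _ oU.
  by rewrite (fixed_point_fibre fx) => g [/= -> _].
exists (saturation alpha beta V); split.
- exact: (open_saturation HG).
- exact: (sub_saturation HG).
- by move=> _ [g Vg <-]; exact: VU.
- exact: (saturation_invariant HG).
Qed.
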